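(* The size $z_{77}$ of the non-self-referencing LZ77 factorization satisfies (already over a ternary alphabet): substitutions: $\liminf_{n\to\infty}\mathsf{MS}_{\mathrm{sub}}(z_{77},n)\ge 2$ and $\mathsf{AS}_{\mathrm{sub}}(z_{77},n)\ge z_{77}-1$; insertions: $\liminf_{n\to\infty}\mathsf{MS}_{\mathrm{ins}}(z_{77},n)\ge 2$ and $\mathsf{AS}_{\mathrm{ins}}(z_{77},n)\ge z_{77}-1$; deletions: $\liminf_{n\to\infty}\mathsf{MS}_{\mathrm{del}}(z_{77},n)\ge 2$ and $\mathsf{AS}_{\mathrm{del}}(z_{77},n)\ge z_{77}-2$.
   Context: Strings are over an alphabet $\Sigma$ (with at least three characters); $\mathsf{ed}$ is the edit distance. $\mathsf{MS}_{\mathrm{sub}}(C,n)=\max_{T\in\Sigma^n}\{C(T')/C(T): T'\in\Sigma^n,\ \mathsf{ed}(T,T')=1\}$, with $\mathsf{MS}_{\mathrm{ins}},\mathsf{MS}_{\mathrm{del}}$ analogous for $T'$ of length $n+1$, resp. $n-1$, and $\mathsf{AS}_\ast$ analogous with $C(T')-C(T)$. A bound ''$\mathsf{AS}\ge z_{77}-c$'' means there are strings $T$ with $z_{77}(T)$ arbitrarily large and $T'$ obtained by one edit of that type with $z_{77}(T')-z_{77}(T)\ge z_{77}(T)-c$. The non-self-referencing LZ77 factorization of $T$ is $T=f_1\cdots f_z$ where, with $f_0=\varepsilon$, for each $1\le i<z$ the factor $f_i$ is the shortest prefix of $f_i\cdots f_z$ that does not occur as a substring of $f_0f_1\cdots f_{i-1}$,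 and $f_z$ is the remaining suffix; $z_{77}(T)=z$. *)

From mathcomp Require Import all_boot all_order all_algebra.
Set Implicit Arguments. Unset Strict Implicit. Unset Printing Implicit Defensive.
Import Order.TTheory GRing.Theory Num.Theory.

Section Defs.
Variable A : eqType.

Fixpoint ed (s t : seq A) : nat :=
  match s with
  | [::] => size t
  | x :: s' =>
      let fix ed_in (t : seq A) : nat :=
        match t with
        | [::] => size s
        | y :: t' => minn (minn (ed s' t).+1 (ed_in t').+1) (ed s' t' + (x != y))
        end
      in ed_in t
  end.

(* Length of the LZ77 factor starting at position p of w: the shortest
   l >= 1 such that w[p..p+l) does not occur as a substring of w[0..p);
   if no prefix of the remaining suffix has this property, the whole
   remaining suffix (the last factor). *)
Definition lz_next_len (w : seq A) (p : nat) : nat :=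
  let r := drop p w in
  minn (find (fun l => ~~ infix (take l.+1 r) (take p w)) (iota 0 (size r))).+1
       (size r).

Fixpoint lz_factors (fuel : nat) (w : seq A) (p : nat) : seq (seq A) :=
  match fuel with
  | 0 => [::]
  | f.+1 =>
      if p < size w then
        let l := lz_next_len w p in
        take l (drop p w) :: lz_factors f w (p + l)
      else [::]
  end.

Definition lz77 (w : seq A) : seq (seq A) := lz_factors (size w) w 0.

Definition z77 (w : seq A) : nat := size (lz77 w).
End Defs.

Local Open Scope ring_scope.

Definition ratio (a b : nat) : rat := (a%:R / b%:R)%R.

Definition MS_sub (S : finType) (n : nat) : rat :=
  \big[Order.max/0]_(T : n.-tuple S)
    \big[Order.max/0]_(T' : n.-tuple S | ed T T' == 1%N) ratio (z77 T') (z77 T).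
Definition MS_ins (S : finType) (n : nat) : rat :=
  \big[Order.max/0]_(T : n.-tuple S)
    \big[Order.max/0]_(T' : n.+1.-tuple S | ed T T' == 1%N) ratio (z77 T') (z77 T).
Definition MS_del (S : finType) (n : nat) : rat :=
  \big[Order.max/0]_(T : n.-tuple S)
    \big[Order.max/0]_(T' : n.-1.-tuple S | ed T T' == 1%N) ratio (z77 T') (z77 T).

Definition liminf_ge (u : nat -> rat) (c : rat) : Prop :=
  forall eps : rat, 0 < eps -> exists N : nat, forall n : nat, (N <= n)%N -> c - eps <= u n.

(* "AS >= z77 - c" for edits with |T'| = |T| + d (d = 0, 1 or -1 encoded by
   the length relation len) : there are T with z77 T arbitrarily large and T'
   at edit distance 1 with z77 T' - z77 T >= z77 T - c. *)
Definition AS_ge (S : eqType) (len : nat -> nat -> bool) (c : nat) : Prop :=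
  forall m : nat, exists T T' : seq S,
    [/\ (m <= z77 T)%N, len (size T) (size T'), ed T T' = 1%N
      & (z77 T + z77 T <= z77 T' + c)%N].

(* Over two letters a != c let T_0 = a and T_(k+1) = T_k T_k c.  The LZ77 factors
   of T_k are a, T_0 c, ..., T_(k-1) c, so z77 T_k = k + 1.  As T_(k+1) = aac R_k,
   one edit turns it into W R_k with W = abc, abac or ac.  Without the prefix aac
   the earlier sources are lost: after the factors of W, each block T_j c of R_k
   splits into the two factors T_j a and (T_j minus its first letter) cc, since
   neither T_j a nor c^(j+2) occurs before.  So z77 (W R_k) = |factors of W| + 2k
   while z77 T_(k+1) = k + 2.  For the multiplicative bounds at every length, both
   strings are padded by a prefix of T_(k+1) c, which adds exactly one factor to
   T_(k+1) and at least one to W R_k. *)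

From Pilot Require Import Defs.
From mathcomp Require Import all_boot all_order all_algebra.
From mathcomp Require Import zify lra.
Set Implicit Arguments. Unset Strict Implicit. Unset Printing Implicit Defensive.
Import Order.TTheory GRing.Theory Num.Theory.

Section Words.
Variable A : eqType.
Implicit Types (u v c d e : A) (w pre f rest s t x y : seq A) (fs : seq (seq A)).

Lemma ed_cons u v s t :
  ed (u :: s) (v :: t) = minn (minn (ed s (v :: t)).+1 (ed (u :: s) t).+1) (ed s t + (u != v)).
Proof. by []. Qed.

Lemma ed_refl s : ed s s = 0.
Proof.
elim: s => [|u s IH] //; rewrite ed_cons eqxx IH addn0.
by apply/eqP; rewrite -leqn0 geq_minr.
Qed.

Lemma ed_eq0 s t : ed s t = 0 -> s = t.
Proof.
elim: s t => [|u s IH] [|v t] //; rewrite ed_cons => /eqP.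
rewrite -leqn0 !geq_min !ltn0 /= leqn0 addn_eq0 eqb0 negbK.
by case/andP => /eqP /IH -> /eqP ->.
Qed.

Lemma ed_eq1 s t : ed s t <= 1 -> s != t -> ed s t = 1.
Proof.
move=> le1 neq; apply/eqP; rewrite eqn_leq le1 lt0n.
by apply: contra neq => /eqP /ed_eq0 ->.
Qed.

Lemma ed_cons2 u s t : ed (u :: s) (u :: t) <= ed s t.
Proof. by rewrite ed_cons eqxx addn0 geq_minr. Qed.

Lemma ed_subst u v s : ed (u :: s) (v :: s) <= 1.
Proof. by rewrite ed_cons geq_min ed_refl leq_b1 orbT. Qed.

Lemma ed_ins v s : ed s (v :: s) <= 1.
Proof. by case: s => [|u s] //; rewrite ed_cons !geq_min ed_refl leqnn orbT. Qed.

Lemma ed_del u s : ed (u :: s) s <= 1.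
Proof. by case: s => [|v s] //; rewrite ed_cons !geq_min ed_refl leqnn. Qed.

Lemma infix_cat_split s x y : infix s (x ++ y) ->
  [\/ infix s x, infix s y |
      exists s1 s2, [/\ s = s1 ++ s2, s1 != [::], s2 != [::], suffix s1 x & prefix s2 y]].
Proof.
elim: x => [|z x IH]; first by move=> s_y; apply: Or32.
rewrite cat_cons infix_consl => /orP[|/IH [s_x|s_y|[s1 [s2 [-> s10 s20 suf pre]]]]].
- rewrite prefixE -cat_cons => /eqP; rewrite take_cat; case: ltnP => _ Es.
    by apply: Or31; rewrite -Es infix_take.
  have [s20|s20] := eqVneq (take (size s - size (z :: x)) y) [::].
    by apply: Or31; rewrite -Es s20 cats0 infix_refl.
  apply: Or33; exists (z :: x), (take (size s - size (z :: x)) y).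
  by rewrite suffix_refl prefix_take.
- by apply: Or31; apply: infix_trans s_x (infix_cons _ _).
- by apply: Or32.
- by apply: Or33; exists s1, s2; rewrite -cat1s suffix_catr.
Qed.

Lemma suffix_of_suffixes s t w : suffix s w -> suffix t w -> size s <= size t -> suffix s t.
Proof.
rewrite /suffix !prefixE !size_rev => /eqP s_w /eqP t_w le_st.
by rewrite -t_w take_takel ?s_w.
Qed.

Lemma prefix_of_prefixes s t w : prefix s w -> prefix t w -> size s <= size t -> prefix s t.
Proof. by rewrite !prefixE => /eqP s_w /eqP t_w le_st; rewrite -t_w take_takel ?s_w. Qed.

Lemma infix_last_neq s d e x :
  d != e -> infix (s ++ [:: d]) (x ++ [:: e]) -> infix (s ++ [:: d]) x.
Proof.
move=> de /infix_cat_split [//|| [s1 [s2 [E _ s20 _]]]].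
  rewrite infixs1 !cats1 -size_eq0 size_rcons /= => /eqP.
  by rewrite -[[:: e]]/(rcons [::] e) => /rcons_inj [_ de_eq]; rewrite de_eq eqxx in de.
rewrite prefixs1 (negbTE s20) /= => /eqP Es2.
by move: E; rewrite Es2 !cats1 => /rcons_inj [_ de_eq]; rewrite de_eq eqxx in de.
Qed.

Section Runs.
Variable c : A.

Lemma nseqSr r : nseq r c ++ [:: c] = nseq r.+1 c.
Proof. by rewrite -addn1 nseqD. Qed.

Lemma infix_nseq_le r m w : m <= r -> infix (nseq r c) w -> infix (nseq m c) w.
Proof. by move=> le_mr; rewrite -(subnKC le_mr) nseqD; apply: catr_infix. Qed.

Lemma infix_nseq_cat_cons r x d y : d != c -> infix (nseq r c) (x ++ d :: y) ->
  infix (nseq r c) x \/ infix (nseq r c) (d :: y).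
Proof.
move=> dc /infix_cat_split [|| [s1 [[|e s2] [E _ s20 _]]]]; [by left|by right|by []|].
rewrite prefix_cons => /andP [/eqP e_d _].
have : e \in nseq r c by rewrite E mem_cat inE eqxx orbT.
by rewrite mem_nseq e_d (negbTE dc) andbF.
Qed.

Lemma infix_nseq_rcons r x : infix (nseq r.+1 c) (x ++ [:: c]) ->
  infix (nseq r.+1 c) x \/ suffix (nseq r c) x.
Proof.
move/infix_cat_split => [|/size_infix|[s1 [s2 [E _ s20 suf]]]]; first by left.
  by case: r => // _; right; apply: suffix0s.
rewrite prefixs1 (negbTE s20) /= => /eqP Es2.
by right; move: E suf; rewrite Es2 -nseqSr !cats1 => /rcons_inj [->].
Qed.

Lemma infix_nseq_cat1_cat_cons r x d y : d != c ->
  infix (nseq r c ++ [:: d]) (x ++ d :: y) ->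
  [\/ infix (nseq r c ++ [:: d]) x, infix (nseq r c ++ [:: d]) (d :: y)
    | suffix (nseq r c) x].
Proof.
move=> dc /infix_cat_split [|| [s1 [s2 [E _ s20 suf pre]]]]; [exact: Or31|exact: Or32|].
apply: Or33.
have size_s12 : size s1 + size s2 = r.+1 by rewrite -size_cat -E size_cat size_nseq addn1.
suff size_s1 : size s1 = r.
  by rewrite -(take_size_cat [:: d] (size_nseq r c)) E -size_s1 take_size_cat.
apply/eqP; rewrite eqn_leq -ltnS -size_s12 -addn1 leq_add2l lt0n size_eq0 s20 /=.
rewrite leqNgt; apply/negP => lt_s1.
have : s2 = drop (size s1) (nseq r c ++ [:: d]) by rewrite E drop_size_cat.
rewrite drop_cat size_nseq lt_s1 drop_nseq.
case: s2 s20 pre {E size_s12} => [//|e s2] _; rewrite prefix_cons => /andP [/eqP ->] _.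
case: (r - size s1) (subn_gt0 (size s1) r) => [|k]; first by rewrite lt_s1.
by move=> _ [dc_eq]; rewrite dc_eq eqxx in dc.
Qed.

Lemma suffix_nseq_cat1 r s d : d != c ->
  suffix s (nseq r c ++ [:: d]) -> prefix [:: d] s -> s = [:: d].
Proof.
move=> dc; case: s => [//|e [|e' s]] suf; rewrite prefix_cons => /andP [/eqP de _].
  by rewrite de.
have le_s : (size s).+1 <= r by move/size_suffix: suf; rewrite size_cat size_nseq /= addn1 !ltnS.
move: suf; rewrite suffixE size_cat size_nseq addn1 /= subSS drop_cat size_nseq.
rewrite ifT; last by lia.
by rewrite drop_nseq subKn //= -de eqseq_cons eq_sym (negbTE dc).
Qed.

End Runs.

Lemma lz_next_len_factor w pre f rest :
  w = pre ++ f ++ rest -> f != [::] -> infix (take (size f).-1 f) pre ->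
  (rest == [::]) || ~~ infix f pre -> lz_next_len w (size pre) = size f.
Proof.
move=> -> f0 f_init f_last; rewrite /lz_next_len drop_size_cat // take_size_cat //.
set P := (fun l => _); set s := iota 0 _.
have f_gt0 : 0 < size f by rewrite lt0n size_eq0.
have size_s : size s = size (f ++ rest) by rewrite size_iota.
have P_init : {in gtn (size f).-1, forall l, ~~ P l}.
  move=> l /= lt_l; rewrite /P negbK take_cat ifT; last first.
    by rewrite -(prednK f_gt0) ltnS.
  by rewrite -(take_takel f lt_l); apply: infix_trans (infix_take _ _) f_init.
have find_ge : (size f).-1 <= find P s.
  rewrite leqNgt; apply/negP => lt_find.
  have s_find : find P s < size s.
    by rewrite size_s size_cat (leq_trans lt_find) // (leq_trans (leq_pred _)) ?leq_addr.
  have := nth_find 0 (a := P) (s := s); rewrite has_find s_find nth_iota -?size_s //.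
  by rewrite add0n (negbTE (P_init _ lt_find)) => /(_ isT).
case/orP: f_last => [/eqP -> | f_new].
  by rewrite cats0; apply/minn_idPr; rewrite -(prednK f_gt0) ltnS.
have P_last : P (size f).-1 by rewrite /P prednK // take_size_cat // f_new.
have find_le : find P s <= (size f).-1.
  rewrite leqNgt; apply/negP => /(before_find 0).
  by rewrite nth_iota ?add0n ?P_last // size_cat -(prednK f_gt0) ltnS leq_addr.
have -> : find P s = (size f).-1 by apply/eqP; rewrite eqn_leq find_ge find_le.
by rewrite prednK //; apply/minn_idPl; rewrite size_cat leq_addr.
Qed.

(* The LZ77 factorization of [pre ++ flatten fs ++ rest], if it has a factor
   boundary after [pre], continues with the factors [fs]. *)
Fixpoint lz_parse pre fs rest : Prop :=
  if fs is f :: fs' then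
    [/\ f != [::], infix (take (size f).-1 f) pre,
        (flatten fs' ++ rest == [::]) || ~~ infix f pre & lz_parse (pre ++ f) fs' rest]
  else True.

Lemma lz_parse_cat pre fs1 fs2 rest :
  lz_parse pre fs1 (flatten fs2 ++ rest) -> lz_parse (pre ++ flatten fs1) fs2 rest ->
  lz_parse pre (fs1 ++ fs2) rest.
Proof.
elim: fs1 pre => [|f fs1 IH] pre /=; first by rewrite cats0.
case=> f0 f_init f_last parse_fs1 parse_fs2; split => //.
  by rewrite flatten_cat -catA.
by apply: IH => //; rewrite -catA.
Qed.

Lemma lz_factorsS fuel w p : p < size w ->
  lz_factors fuel.+1 w p =
  take (lz_next_len w p) (drop p w) :: lz_factors fuel w (p + lz_next_len w p).
Proof. by move=> /= ->. Qed.

Lemma size_lz_parse pre fs rest : lz_parse pre fs rest -> size fs <= size (flatten fs).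
Proof.
elim: fs pre => [|f fs IH] pre //= [f0 _ _ /IH le_fs].
by rewrite size_cat -add1n leq_add // lt0n size_eq0.
Qed.

Lemma lz_factors_parse fs pre rest fuel : lz_parse pre fs rest -> size fs <= fuel ->
  lz_factors fuel (pre ++ flatten fs ++ rest) (size pre) =
  fs ++ lz_factors (fuel - size fs) (pre ++ flatten fs ++ rest) (size (pre ++ flatten fs)).
Proof.
elim: fs pre fuel => [|f fs IH] pre fuel /=; first by rewrite cats0 subn0.
case=> f0 f_init f_last parse_fs; case: fuel => [//|fuel]; rewrite ltnS => le_fs.
have f_gt0 : 0 < size f by rewrite lt0n size_eq0.
rewrite -catA lz_factorsS; last by rewrite !size_cat; lia.
rewrite (@lz_next_len_factor _ pre f (flatten fs ++ rest)) //.
rewrite drop_size_cat // take_size_cat // -size_cat [pre ++ f ++ _]catA IH //.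
by rewrite subSS -!catA.
Qed.

Lemma z77_parse fs : lz_parse [::] fs [::] -> z77 (flatten fs) = size fs.
Proof.
move=> parse; have := lz_factors_parse parse (size_lz_parse parse).
rewrite /z77 /lz77 /= !cats0 => ->.
by case: (_ - _) => [|fuel]; rewrite ?cats0 //= ltnn cats0.
Qed.

Lemma z77_parse_cat fs rest :
  lz_parse [::] fs rest -> rest != [::] -> size fs < z77 (flatten fs ++ rest).
Proof.
move=> parse rest0; have le_fs := size_lz_parse parse.
have lt_rest : size (flatten fs) < size (flatten fs ++ rest).
  by rewrite size_cat -{1}[size (flatten fs)]addn0 ltn_add2l lt0n size_eq0.
rewrite /z77 /lz77 -[flatten fs ++ rest]cat0s lz_factors_parse //=; last first.
  by rewrite size_cat (leq_trans le_fs) ?leq_addr.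
rewrite size_cat -addn1 leq_add2l.
case E: (_ - _) => [|fuel]; last by rewrite lz_factorsS.
by move/eqP: E; rewrite subn_eq0 leqNgt (leq_ltn_trans le_fs lt_rest).
Qed.
End Words.

Section Construction.
Variables (A : eqType) (a c : A).
Hypothesis a_neq_c : a != c.

Fixpoint Tw k := if k is k'.+1 then Tw k' ++ Tw k' ++ [:: c] else [:: a].
Fixpoint Rw k := if k is k'.+1 then Rw k' ++ Tw k ++ [:: c] else [::].

Lemma Tw_cons k : Tw k = a :: behead (Tw k).
Proof. by elim: k => [|k /= ->]. Qed.

Lemma Tw_cat1 k : Tw k ++ [:: c] = a :: (behead (Tw k) ++ [:: c]).
Proof. by rewrite {1}Tw_cons. Qed.

Lemma TwS k : Tw k.+1 = Tw k ++ a :: (behead (Tw k) ++ [:: c]).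
Proof. by rewrite /= Tw_cat1. Qed.

Lemma RwS k : Rw k.+1 = Rw k ++ a :: (behead (Tw k.+1) ++ [:: c]).
Proof. by rewrite -Tw_cat1. Qed.

Lemma Tw_aac k : Tw k.+1 = [:: a; a; c] ++ Rw k.
Proof. by elim: k => [|k IH] //; rewrite -[Tw k.+2]/(Tw k.+1 ++ _) {1}IH -catA. Qed.

Lemma size_Tw k : (size (Tw k)).+1 = 2 ^ k.+1.
Proof.
elim: k => [|k IH] //.
by rewrite expnS mul2n -IH -addnn /= !size_cat /= addn1 addSn.
Qed.

Lemma suffix_nseq_Tw k : suffix (nseq k c) (Tw k).
Proof.
elim: k => [|k IH]; first exact: suffix0s.
by rewrite -nseqSr /= catA suffix_catl // (suffix_catr _ IH) eqxx.
Qed.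

Lemma Tw_no_run k : ~~ infix (nseq k.+1 c) (Tw k).
Proof.
elim: k => [|k IH]; first by rewrite infix1s inE eq_sym.
apply/negP; rewrite TwS => /(infix_nseq_cat_cons a_neq_c) [|].
  by apply/negP; apply: contra IH; apply: infix_nseq_le.
rewrite -Tw_cat1 => /infix_nseq_rcons [|/suffixW]; apply/negP; last exact: IH.
by apply: contra IH; apply: infix_nseq_le.
Qed.

Lemma Tw_no_run_a k : ~~ infix (nseq k.+1 c ++ [:: a]) (Tw k.+1).
Proof.
apply/negP; rewrite TwS => /(infix_nseq_cat1_cat_cons a_neq_c) [||/suffixW].
- by move/catr_infix; apply/negP; apply: Tw_no_run.
- by rewrite -Tw_cat1 => /(infix_last_neq a_neq_c) /catr_infix; apply/negP; apply: Tw_no_run.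
- by apply/negP; apply: Tw_no_run.
Qed.

Lemma Tw_c_no_run_a k : ~~ infix (nseq k.+1 c ++ [:: a]) (Tw k.+1 ++ [:: c]).
Proof. by apply: contra (Tw_no_run_a k); apply: infix_last_neq. Qed.

Definition Tw_parse k := [:: a] :: [seq Tw j ++ [:: c] | j <- iota 0 k].

Lemma Tw_parseS k : Tw_parse k.+1 = Tw_parse k ++ [:: Tw k ++ [:: c]].
Proof. by rewrite /Tw_parse -addn1 iotaD map_cat. Qed.

Lemma flatten_Tw_parse k : flatten (Tw_parse k) = Tw k.
Proof. by elim: k => [|k IH] //; rewrite Tw_parseS flatten_cat IH /= cats0. Qed.

Lemma size_Tw_parse k : size (Tw_parse k) = k.+1.
Proof. by rewrite /= size_map size_iota. Qed.

Lemma lz_parse_Tw k rest : lz_parse [::] (Tw_parse k) rest.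
Proof.
elim: k rest => [|k IH] rest; first by split; rewrite ?orbT.
rewrite Tw_parseS; apply: lz_parse_cat => //; rewrite flatten_Tw_parse.
split => //.
- by rewrite -size_eq0 size_cat addn1.
- by rewrite size_cat addn1 /= take_size_cat ?infix_refl.
- by apply/orP; right; apply/negP => /size_infix; rewrite size_cat addn1 ltnn.
Qed.

Lemma z77_Tw k : z77 (Tw k) = k.+1.
Proof. by rewrite -flatten_Tw_parse z77_parse ?size_Tw_parse //; apply: lz_parse_Tw. Qed.

Lemma z77_Tw_pad k m : 0 < m <= (size (Tw k)).+1 ->
  z77 (Tw k ++ take m (Tw k ++ [:: c])) = k.+2.
Proof.
case/andP=> m_gt0 m_le; set pad := take m _.
have size_pad : size pad = m by rewrite size_takel // size_cat addn1.
have -> : Tw k ++ pad = flatten (Tw_parse k ++ [:: pad]).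
  by rewrite flatten_cat flatten_Tw_parse /= cats0.
rewrite z77_parse ?size_cat ?size_Tw_parse ?addn1 //.
apply: lz_parse_cat; first exact: lz_parse_Tw.
rewrite flatten_Tw_parse; split => //.
- by rewrite -size_eq0 size_pad -lt0n.
- rewrite size_pad take_takel ?leq_pred // takel_cat ?infix_take //.
  by rewrite -ltnS prednK.
Qed.

Definition Gw i := Tw i ++ [:: a].
Definition Hw i := behead (Tw i) ++ [:: c; c].

Lemma flatten_GHw i : Gw i ++ Hw i = Tw i.+1 ++ [:: c].
Proof. by rewrite /Gw /Hw -catA cat1s -cat_cons -Tw_cons [Tw i.+1]/= -!catA. Qed.

(* The last six fields keep [W] from serving as a source for the factors [Gw j]
   and [Hw j] of [Rw k]. *)
Record aac_replacement (W : seq A) (Wfs : seq (seq A)) : Prop := AacReplacement {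
  ed_aac_W : forall x, ed ([:: a; a; c] ++ x) (W ++ x) = 1;
  flatten_Wfs : flatten Wfs = W;
  lz_parse_Wfs : forall rest, lz_parse [::] Wfs rest;
  size_Wfs : 2 <= size Wfs <= 4;
  a_in_W : a \in W;
  c_in_W : c \in W;
  W_no_cc : ~~ infix [:: c; c] W;
  W_no_ca : ~~ infix [:: c; a] W;
  W_no_aa : ~~ infix [:: a; a] W;
  W_not_aac : ~~ suffix [:: a; a; c] W }.

Section Replacement.
Variables (W : seq A) (Wfs : seq (seq A)).
Hypothesis HW : aac_replacement W Wfs.

Lemma WRw_no_run i : ~~ infix (nseq i.+2 c) (W ++ Rw i).
Proof.
elim: i => [|i IH]; first by rewrite cats0 (W_no_cc HW).
apply/negP; rewrite RwS catA => /(infix_nseq_cat_cons a_neq_c) [|].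
  by apply/negP; apply: contra IH; apply: infix_nseq_le.
have no_run := Tw_no_run i.+1.
rewrite -Tw_cat1 => /infix_nseq_rcons [|/suffixW]; apply/negP; last exact: no_run.
by apply: contra no_run; apply: infix_nseq_le.
Qed.

Lemma WRw_no_run_a i : ~~ infix (nseq i.+1 c ++ [:: a]) (W ++ Rw i).
Proof.
case: i => [|i]; first by rewrite cats0 (W_no_ca HW).
apply/negP; rewrite RwS catA => /(infix_nseq_cat1_cat_cons a_neq_c) [||/suffixW].
- by move/catr_infix; apply/negP; apply: WRw_no_run.
- rewrite -Tw_cat1 -[nseq i.+2 c ++ _]/([:: c] ++ (nseq i.+1 c ++ [:: a])) => /catl_infix.
  by apply/negP; apply: Tw_c_no_run_a.
- by apply/negP; apply: WRw_no_run.
Qed.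

Lemma Gw_new i : ~~ infix (Gw i) (W ++ Rw i).
Proof.
case: i => [|i]; first by rewrite cats0 (W_no_aa HW).
(* c^(i+1) a ends Gw (i+1), and in W R_(i+1) it only occurs across the border
   before T_(i+1) c; so Gw (i+1) would end there, making aac a suffix of W. *)
set P := nseq i.+1 c ++ [:: a].
have P_Gw : suffix P (Gw i.+1) by rewrite /Gw suffix_catl // suffix_nseq_Tw eqxx.
apply/negP; rewrite -[Rw i.+1]/(Rw i ++ Tw i.+1 ++ [:: c]) catA.
case/infix_cat_split => [|| [s1 [s2 [E s10 s20 suf pre]]]].
- by move/(suffix_infix_trans P_Gw); apply/negP; apply: WRw_no_run_a.
- by move/(suffix_infix_trans P_Gw); apply/negP; apply: Tw_c_no_run_a.
have size_s2 : size s2 <= size (Tw i.+1).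
  have s1_gt0 : 0 < size s1 by rewrite lt0n size_eq0.
  move: (congr1 size E); rewrite /Gw !size_cat /=; lia.
have pre_Tw : prefix s2 (Tw i.+1) := prefix_of_prefixes pre (prefix_prefix _ _) size_s2.
have suf_Gw : suffix s2 (Gw i.+1) by rewrite E suffix_suffix.
have [le_P | lt_P] := leqP (size P) (size s2).
  have := suffix_infix_trans (suffix_of_suffixes P_Gw suf_Gw le_P) (prefixW pre_Tw).
  by apply/negP; apply: Tw_no_run_a.
have a_s2 : prefix [:: a] s2.
  case: s2 s20 pre_Tw {E pre suf_Gw size_s2 lt_P} => [//|e s2] _.
  by rewrite Tw_cons !prefix_cons => /andP [/eqP -> _]; rewrite eqxx prefix0s.
have s2_a : s2 = [:: a].
  exact: suffix_nseq_cat1 a_neq_c (suffix_of_suffixes suf_Gw P_Gw (ltnW lt_P)) a_s2.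
rewrite s2_a in E; move: suf.
have -> : s1 = Tw i.+1 by apply: (@rcons_injl _ a); rewrite -!cats1 -E.
rewrite Tw_aac suffix_catl // => /andP [_ aac_W].
by move: (W_not_aac HW); rewrite aac_W.
Qed.

Lemma Hw_new i : ~~ infix (Hw i) ((W ++ Rw i) ++ Gw i).
Proof.
have run_Hw : suffix (nseq i.+2 c) (Hw i).
  case/suffixP: (suffix_nseq_Tw i) => u Eu.
  have : i < size (Tw i) by rewrite -ltnS size_Tw ltn_expl.
  rewrite /Hw Eu size_cat size_nseq; case: u {Eu} => [|x u]; first by rewrite add0n ltnn.
  by move=> _; rewrite -addn2 nseqD /= -catA suffix_suffix.
apply/negP => /(suffix_infix_trans run_Hw).
rewrite /Gw {1}Tw_cons cat_cons => /(infix_nseq_cat_cons a_neq_c) [|].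
  by apply/negP; apply: WRw_no_run.
rewrite -cat_cons -Tw_cons => /(infix_nseq_cat_cons a_neq_c) [|/size_infix //].
by apply/negP; apply: contra (Tw_no_run i); apply: infix_nseq_le.
Qed.

Lemma lz_parse_GHw i rest : lz_parse (W ++ Rw i) [:: Gw i; Hw i] rest.
Proof.
split; last (split; last by []).
- by rewrite -size_eq0 size_cat addn1.
- rewrite /Gw size_cat addn1 /= take_size_cat //.
  case: i => [|i]; first by rewrite infix1s mem_cat (a_in_W HW).
  by rewrite -[Rw i.+1]/(Rw i ++ Tw i.+1 ++ [:: c]) catA infix_infix.
- by rewrite Gw_new orbT.
- by rewrite -size_eq0 size_cat /= addn2.
- rewrite /Hw -[[:: c; c]]/([:: c] ++ [:: c]) catA size_cat addn1 succnK take_size_cat //.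
  case: i => [|i]; first by rewrite infix1s !mem_cat (c_in_W HW).
  by apply: infix_catr; rewrite RwS catA; apply: infix_catl; apply: infix_cons.
- by rewrite Hw_new orbT.
Qed.

Definition GHw_parse i := flatten [seq [:: Gw j; Hw j] | j <- iota 0 i].

Lemma GHw_parseS i : GHw_parse i.+1 = GHw_parse i ++ [:: Gw i; Hw i].
Proof. by rewrite /GHw_parse -addn1 iotaD map_cat flatten_cat /= add0n. Qed.

Lemma flatten_GHw_parse i : flatten (GHw_parse i) = Rw i.
Proof.
elim: i => [|i IH] //.
by rewrite GHw_parseS flatten_cat IH /= cats0 flatten_GHw.
Qed.

Lemma size_GHw_parse i : size (GHw_parse i) = i.*2.
Proof. by elim: i => [|i IH] //; rewrite GHw_parseS size_cat IH /= doubleS addn2. Qed.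

Lemma lz_parse_WRw i rest : lz_parse [::] (Wfs ++ GHw_parse i) rest.
Proof.
apply: lz_parse_cat; first exact: (lz_parse_Wfs HW).
rewrite /= (flatten_Wfs HW); elim: i rest => [|i IH] rest //.
by rewrite GHw_parseS; apply: lz_parse_cat => //; rewrite flatten_GHw_parse; apply: lz_parse_GHw.
Qed.

Lemma z77_WRw i : z77 (W ++ Rw i) = size Wfs + i.*2.
Proof.
rewrite -(flatten_Wfs HW) -(flatten_GHw_parse i) -flatten_cat z77_parse.
  by rewrite size_cat size_GHw_parse.
exact: lz_parse_WRw.
Qed.

Lemma z77_WRw_pad i pad : pad != [::] -> size Wfs + i.*2 < z77 (W ++ Rw i ++ pad).
Proof.
move=> pad0; rewrite -(flatten_Wfs HW) -(flatten_GHw_parse i) catA -flatten_cat.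
by rewrite -(size_GHw_parse i) -size_cat z77_parse_cat //; apply: lz_parse_WRw.
Qed.

Lemma padded_edit_pair K n : 2 ^ K.+2 <= n < 2 ^ K.+3 -> exists T T' : seq A,
  [/\ size T = n, size T' + 3 = n + size W, ed T T' = 1, z77 T = K.+3
    & (z77 T).*2 <= z77 T' + 3].
Proof.
move=> n_bounds; set m := n - size (Tw K.+1).
have m_bounds : 0 < m <= (size (Tw K.+1)).+1.
  by move: n_bounds (size_Tw K.+1); rewrite /m [2 ^ K.+3]expnS; lia.
set pad := take m (Tw K.+1 ++ [:: c]).
have size_pad : size pad = m.
  by rewrite size_takel // size_cat addn1; case/andP: m_bounds.
have pad0 : pad != [::] by rewrite -size_eq0 size_pad -lt0n; case/andP: m_bounds.
have size_Tw_aac : size (Tw K.+1) = (size (Rw K)).+3 by rewrite Tw_aac.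
exists (Tw K.+1 ++ pad), (W ++ Rw K ++ pad); split.
- by move: m_bounds; rewrite size_cat size_pad /m; lia.
- by move: m_bounds; rewrite !size_cat size_pad /m; lia.
- by rewrite Tw_aac -catA (ed_aac_W HW).
- exact: z77_Tw_pad.
- by move: (z77_WRw_pad K pad0) (size_Wfs HW); rewrite z77_Tw_pad //; lia.
Qed.

Lemma edit_pairs_large K : exists N, forall n, N <= n -> exists T T' : seq A,
  [/\ size T = n, size T' + 3 = n + size W, ed T T' = 1, K < z77 T
    & (z77 T).*2 <= z77 T' + 3].
Proof.
exists (2 ^ K.+2) => n le_n.
have n_gt0 : 0 < n by apply: leq_trans le_n; rewrite expn_gt0.
have /andP [lb ub] := trunc_log_bounds (isT : 1 < 2) n_gt0.
have le_K := trunc_log_max (isT : 1 < 2) le_n.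
have t_eq : (trunc_log 2 n - 2).+2 = trunc_log 2 n by lia.
have [|T [T' [size_T size_T' ed_TT' z_T z_T']]] := @padded_edit_pair (trunc_log 2 n - 2) n.
  by rewrite t_eq lb ub.
by exists T, T'; split => //; rewrite z_T; lia.
Qed.

Lemma AS_ge_aac_replacement (len : rel nat) :
  (forall n n', n' + 3 = n + size W -> len n n') -> AS_ge A len (4 - size Wfs).
Proof.
move=> len_W M; exists (Tw M.+1), (W ++ Rw M); split.
- by rewrite z77_Tw -addn2 leq_addr.
- by apply: len_W; rewrite Tw_aac !size_cat /=; lia.
- by rewrite Tw_aac (ed_aac_W HW).
- by move: (size_Wfs HW); rewrite z77_Tw z77_WRw; lia.
Qed.
End Replacement.
End Construction.

Section Sensitivity.
Variable S : finType.
Local Open Scope ring_scope.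

(* [MS_sub S], [MS_ins S] and [MS_del S] are [MS_edit] with [m] = [id], [succn]
   and [predn], up to conversion. *)
Definition MS_edit (m : nat -> nat) (n : nat) : rat :=
  \big[Order.max/0]_(T : n.-tuple S)
    \big[Order.max/0]_(T' : (m n).-tuple S | ed T T' == 1%N) Defs.ratio (z77 T') (z77 T).

Lemma ratio_le_MS_edit m n (T T' : seq S) :
  size T = n -> size T' = m n -> ed T T' = 1%N -> Defs.ratio (z77 T') (z77 T) <= MS_edit m n.
Proof.
move=> /eqP size_T /eqP size_T' ed1.
by apply: (bigmax_sup (Tuple size_T)) => //; apply: (bigmax_sup (Tuple size_T')); rewrite ?ed1.
Qed.

Lemma two_sub_le_ratio (z z' : nat) (eps : rat) :
  0 < eps -> 3%:R / eps < z%:R -> (z.*2 <= z' + 3)%N -> 2 - eps <= Defs.ratio z' z.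
Proof.
move=> eps_gt0 z_large le_zz'.
have z_gt0 : (0 < z%:R :> rat) by apply: le_lt_trans z_large; rewrite divr_ge0 // ltW.
rewrite /Defs.ratio ler_pdivlMr //; move: z_large; rewrite ltr_pdivrMr // => z_large.
have : (z.*2)%:R <= (z' + 3)%:R :> rat by rewrite ler_nat.
rewrite -muln2 natrM natrD; nra.
Qed.

Lemma liminf_MS_edit (m : nat -> nat) :
  (forall K, exists N, forall n, (N <= n)%N -> exists T T' : seq S,
     [/\ size T = n, size T' = m n, ed T T' = 1%N, (K < z77 T)%N
       & (z77 T).*2 <= z77 T' + 3]%N) ->
  liminf_ge (MS_edit m) 2.
Proof.
move=> pairs eps eps_gt0.
have /archi_boundP : 0 <= 3%:R / eps :> rat by rewrite divr_ge0 // ltW.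
set K := Num.Def.archi_bound _ => K_large.
have [N pairs_N] := pairs K; exists N => n /pairs_N [T [T' [size_T size_T' ed1 z_T z_T']]].
apply: le_trans (ratio_le_MS_edit size_T size_T' ed1).
by apply: two_sub_le_ratio => //; apply: lt_trans K_large _; rewrite ltr_nat.
Qed.

End Sensitivity.

Lemma z77_aac_replacement_sensitivity (S : finType) (a c : S) W Wfs
    (m : nat -> nat) (len : rel nat) :
  a != c -> aac_replacement a c W Wfs ->
  (forall n n', n' + 3 = n + size W -> n' = m n /\ len n n') ->
  liminf_ge (MS_edit S m) 2%R /\ AS_ge S len (4 - size Wfs).
Proof.
move=> ac HW edit_len; split.
- apply: liminf_MS_edit => K; have [N pairs] := edit_pairs_large ac HW K.
  exists N => n /pairs [T [T' [size_T /edit_len [size_T' _] ed1 z_T z_T']]].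
  by exists T, T'.
- by apply: (AS_ge_aac_replacement ac HW) => n n' /edit_len [].
Qed.

Section Replacements.
Variables (S : eqType) (a b c : S).
Hypotheses (ab : a != b) (ac : a != c) (bc : b != c).

Lemma aac_replacement_abc : aac_replacement a c [:: a; b; c] [:: [:: a]; [:: b]; [:: c]].
Proof.
have neqE := (negbTE ab, negbTE ac, negbTE bc, eq_sym b a, eq_sym c a, eq_sym c b).
constructor;
  [move=> x; apply: ed_eq1 | by move=> *; rewrite /= ?/suffix /= ?inE ?neqE ?eqxx ?orbT ..].
- exact: leq_trans (ed_cons2 _ _ _) (ed_subst _ _ _).
- by rewrite /= !eqseq_cons eqxx neqE.
Qed.

Lemma aac_replacement_abac :
  aac_replacement a c [:: a; b; a; c] [:: [:: a]; [:: b]; [:: a; c]].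
Proof.
have neqE := (negbTE ab, negbTE ac, negbTE bc, eq_sym b a, eq_sym c a, eq_sym c b).
constructor;
  [move=> x; apply: ed_eq1 | by move=> *; rewrite /= ?/suffix /= ?inE ?neqE ?eqxx ?orbT ..].
- exact: leq_trans (ed_cons2 _ _ _) (ed_ins _ _).
- by rewrite /= !eqseq_cons eqxx neqE.
Qed.

Lemma aac_replacement_ac : aac_replacement a c [:: a; c] [:: [:: a]; [:: c]].
Proof.
have neqE := (negbTE ac, eq_sym c a).
constructor;
  [move=> x; apply: ed_eq1 | by move=> *; rewrite /= ?/suffix /= ?inE ?neqE ?eqxx ?orbT ..].
- exact: ed_del.
- by rewrite /= !eqseq_cons eqxx neqE.
Qed.

End Replacements.

Lemma three_distinct (S : finType) :
  3 <= #|S| -> exists a b c : S, [/\ a != b, a != c & b != c].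
Proof.
rewrite cardT; have := enum_uniq S.
case: (enum S) => [|x [|y [|z r]]] //= /andP [x_new /andP [y_new _]] _.
exists x, y, z; move: x_new y_new; rewrite !inE !negb_or.
by case/andP => -> /andP [-> _] /andP [-> _].
Qed.

Unset Implicit Arguments.

Theorem mainTheorem8 (S : finType) (hS : (3 <= #|S|)%N) :
  (liminf_ge (@MS_sub S) 2%R /\ AS_ge S (fun n n' => n' == n) 1) /\
  (liminf_ge (@MS_ins S) 2%R /\ AS_ge S (fun n n' => n' == n.+1) 1) /\
  (liminf_ge (@MS_del S) 2%R /\ AS_ge S (fun n n' => n'.+1 == n) 2).
Proof.
have [a [b [c [ab ac bc]]]] := three_distinct hS.
split; [|split].
- apply: (z77_aac_replacement_sensitivity (m := id) ac (aac_replacement_abc ab ac bc)).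
  by move=> n n' /= /addIn ->.
- apply: (z77_aac_replacement_sensitivity (m := succn) ac (aac_replacement_abac ab ac bc)).
  by move=> n n' /= E; have -> : n' = n.+1 by lia.
- apply: (z77_aac_replacement_sensitivity (m := predn) ac (aac_replacement_ac ac)).
  by move=> n n' /= E; have -> : n = n'.+1 by lia.
Qed.
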